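(* Let $\underline x<\overline x$ and $g\in C^2([\underline x,\overline x])$ satisfy conditions (G1)–(G5) below. 1. The minimizer $(\hat m(x),\hat s_1(x),\hat s_2(x))$ of the infimum in (G2) is well defined for every $x\in[\underline x,\overline x]$. 2. Let $\hat\alpha(x)=\alpha(\hat m(x),\hat s_1(x),\hat s_2(x))$, and define $\hat\beta,\hat\gamma,\hat\theta_1,\hat\theta_2$ analogously. Then the functions $\hat\alpha$, $\hat\beta$, $\hat\gamma$, $\hat\theta_1$, $\hat\theta_2$, $\frac{\hat s_1(x)}{g'(x)}$, $\frac{\hat s_2(x)}{g'(x)}$ and $\frac{\hat\beta(x)}{g'(x)}$ are Lipschitz on $[\underline x,\overline x]$. 3. For $x\in[\underline x,\overline x]$, $$-\hat\alpha(x)g'(x)-\big(\hat m(x)+\hat\beta(x)\big)+\hat\gamma(x)\Big(\frac{x}{g'(x)}\Big)'=0.$$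
   Context: Parameters. - $\rho\in(-1,1)$. - $\mu_1,\mu_2,\sigma_1,\sigma_2>0$. - $\overline\lambda>0$ and $\underline\lambda\in(0,1)$. - $p\in(-\infty,1)\setminus\{0\}$, with $q=p/(1-p)$ and $\operatorname{sgn}(p)$ the sign of $p$. - $\delta>0$. Standing assumption: $$\delta>\frac{q}{2(1-\rho^2)}\Big(\big(\tfrac{\mu_1}{\sigma_1}\big)^2+\big(\tfrac{\mu_2}{\sigma_2}\big)^2-2\rho\tfrac{\mu_1\mu_2}{\sigma_1\sigma_2}\Big),\qquad \mu_1\ne\tfrac{\rho\mu_2\sigma_1}{\sigma_2},\qquad \mu_2\ne\tfrac{\rho\sigma_1\sigma_2}{1+q}.$$ Functions. For $m,s_1,s_2\in\mathbb R$ with $s_1\ne-\sigma_1$, define $$\theta_1(m,s_1,s_2)=\tfrac{\rho(\sigma_2s_2-\mu_2)}{(1-\rho^2)\sigma_2}-\tfrac{\mu_2s_2-(m+\mu_1+s_1\sigma_1+\frac12(s_1^2+s_2^2))\sigma_2}{(1-\rho^2)\sigma_2(s_1+\sigma_1)},\qquad \theta_2=\tfrac{\mu_2}{\sigma_2}-\rho\theta_1,$$ $$\alpha=(1+q)\delta-\tfrac{q(1+q)}2(\theta_1^2+\theta_2^2+2\rho\theta_1\theta_2),\qquad \beta=q\big((s_1+\rho s_2)\theta_1+(\rho s_1+s_2)\theta_2\big),\qquad \gamma=\tfrac12(s_1^2+s_2^2+2\rho s_1s_2).$$ Conditions (G1)–(G5) on $\underline x<\overline x$ and $g\in C^2([\underline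 x,\overline x])$: - (G1) if $\mu_1>\rho\mu_2\sigma_1/\sigma_2$ then $0<\underline x<\overline x$; if $\mu_1<\rho\mu_2\sigma_1/\sigma_2$ then $\underline x<\overline x<0$. - (G2) for $x\in[\underline x,\overline x]$, $$\inf_{m,s_1,s_2}\{-\alpha g(x)-(m+\beta)x+\gamma\tfrac{x}{g'(x)}+\operatorname{sgn}(p)\}=0.$$ - (G3) $g'(\underline x)=g'(\overline x)=0$ and $\int_{\underline x}^{\overline x}\frac{g'(x)}x\,dx=\log\frac{1+\overline\lambda}{1-\underline\lambda}$. - (G4) $q\,g(x)$, $q\,g(x)(g'(x)+1)-(1+q)xg'(x)$, $q(g(x)-xg'(x))$ and $g'(x)+1$ are strictly positive on $[\underline x,\overline x]$. - (G5) $g'(x)/x>0$ on $(\underline x,\overline x)$. *)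

From Stdlib Require Import Reals Lra.
From Coquelicot Require Import Coquelicot.
Open Scope R_scope.

Definition sgnR (p : R) : R := if Rlt_dec 0 p then 1 else -1.

Definition qof (p : R) : R := p / (1 - p).

Definition theta1 (rho mu1 mu2 sig1 sig2 : R) (m s1 s2 : R) : R :=
  rho * (sig2 * s2 - mu2) / ((1 - rho ^ 2) * sig2)
  - (mu2 * s2 - (m + mu1 + s1 * sig1 + / 2 * (s1 ^ 2 + s2 ^ 2)) * sig2)
    / ((1 - rho ^ 2) * sig2 * (s1 + sig1)).

Definition theta2 (rho mu1 mu2 sig1 sig2 : R) (m s1 s2 : R) : R :=
  mu2 / sig2 - rho * theta1 rho mu1 mu2 sig1 sig2 m s1 s2.

Definition alphaF (rho mu1 mu2 sig1 sig2 p delta : R) (m s1 s2 : R) : R :=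
  let q := qof p in
  let t1 := theta1 rho mu1 mu2 sig1 sig2 m s1 s2 in
  let t2 := theta2 rho mu1 mu2 sig1 sig2 m s1 s2 in
  (1 + q) * delta - q * (1 + q) / 2 * (t1 ^ 2 + t2 ^ 2 + 2 * rho * t1 * t2).

Definition betaF (rho mu1 mu2 sig1 sig2 p : R) (m s1 s2 : R) : R :=
  let q := qof p in
  let t1 := theta1 rho mu1 mu2 sig1 sig2 m s1 s2 in
  let t2 := theta2 rho mu1 mu2 sig1 sig2 m s1 s2 in
  q * ((s1 + rho * s2) * t1 + (rho * s1 + s2) * t2).

Definition gammaF (rho : R) (s1 s2 : R) : R :=
  / 2 * (s1 ^ 2 + s2 ^ 2 + 2 * rho * s1 * s2).

(* The objective of (G2), with values in the extended reals.
   g0 = g(x), g1 = g'(x).  When g'(x) = 0 (which by (G3)/(G5) happens exactly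
   at the end points, where x/g'(x) -> +oo), the term gamma * x / g'(x) is read
   as +oo if gamma > 0 and as 0 if gamma = 0 (convention 0 * oo = 0). *)
Definition objG (rho mu1 mu2 sig1 sig2 p delta : R) (x g0 g1 : R)
  (m s1 s2 : R) : Rbar :=
  let a := alphaF rho mu1 mu2 sig1 sig2 p delta m s1 s2 in
  let b := betaF rho mu1 mu2 sig1 sig2 p m s1 s2 in
  let c := gammaF rho s1 s2 in
  let base := - a * g0 - (m + b) * x + sgnR p in
  if Req_EM_T g1 0 then
    (if Req_EM_T c 0 then Finite base else p_infty)
  else Finite (base + c * (x / g1)).

Definition has_deriv_within (D : R -> Prop) (f : R -> R) (x l : R) : Prop :=
  forall eps : R, 0 < eps -> exists delta : R, 0 < delta /\
    forall y : R, D y -> 0 < Rabs (y - x) < delta ->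
      Rabs ((f y - f x) / (y - x) - l) < eps.

Definition continuous_within (D : R -> Prop) (f : R -> R) (x : R) : Prop :=
  forall eps : R, 0 < eps -> exists delta : R, 0 < delta /\
    forall y : R, D y -> Rabs (y - x) < delta -> Rabs (f y - f x) < eps.

Definition C2_on (a b : R) (g g1 g2 : R -> R) : Prop :=
  forall x, a <= x <= b ->
    has_deriv_within (fun y => a <= y <= b) g x (g1 x) /\
    has_deriv_within (fun y => a <= y <= b) g1 x (g2 x) /\
    continuous_within (fun y => a <= y <= b) g2 x.

Definition lipschitz_on (D : R -> Prop) (f : R -> R) : Prop :=
  exists L : R, forall x y, D x -> D y -> Rabs (f x - f y) <= L * Rabs (x - y).

Definition inf_is_zero (sig1 : R) (F : R -> R -> R -> Rbar) : Prop :=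
  (forall m s1 s2, s1 <> - sig1 -> Rbar_le (Finite 0) (F m s1 s2)) /\
  (forall eps, 0 < eps -> exists m s1 s2,
      s1 <> - sig1 /\ Rbar_lt (F m s1 s2) (Finite eps)).

From Stdlib Require Import Reals Lra Psatz.
From Coquelicot Require Import Coquelicot.
Open Scope R_scope.

(* For fixed x, s1 <> -sigma1 makes theta1 an affine function of m, and in the coordinates
   (theta1, s1, s2) the objective of (G2) is a quadratic polynomial.  By (G4) and (G5) its
   quadratic part is a sum of squares with positive weights, so its critical point, which
   has a closed form, is the unique strict minimizer; since the infimum is 0 it is also
   the unique zero.  The closed form is rational in x, g(x), g'(x) with denominators that
   (G4) keeps away from 0 on the compact interval, whence the Lipschitz bounds; s1 and s2
   carry a factor g'(x), whence the bounds for the quotients by g'(x).  Freezing the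
   controls at their value at x, the objective at y is >= 0 and vanishes at y = x, so its
   y-derivative vanishes at x: this is the ODE, whose right-hand side is Lipschitz and so
   extends to the end points. *)

(** * Lipschitz functions and calculus on a compact interval *)

Lemma continuous_within_of_local_lipschitz (D : R -> Prop) f x :
  (exists d K, 0 < d /\
     forall y, D y -> Rabs (y - x) < d -> Rabs (f y - f x) <= K * Rabs (y - x)) ->
  continuous_within D f x.
Proof.
  intros [d [K [Hd HK]]] eps Heps.
  assert (HK1 : 0 < Rabs K + 1) by (pose proof (Rabs_pos K); lra).
  exists (Rmin d (eps / (Rabs K + 1))); split.
  { apply Rmin_glb_lt; [lra | apply Rdiv_lt_0_compat; lra]. }
  intros y Dy Hy.
  pose proof (Rmin_l d (eps / (Rabs K + 1))). pose proof (Rmin_r d (eps / (Rabs K + 1))).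
  assert (Hyx : (Rabs K + 1) * Rabs (y - x) < eps).
  { apply (Rmult_lt_compat_l (Rabs K + 1)) in Hy; [|lra].
    apply (Rlt_le_trans _ _ _ Hy). apply Rmult_le_reg_r with (/ (Rabs K + 1)).
    - apply Rinv_0_lt_compat; lra.
    - field_simplify; lra. }
  pose proof (HK y Dy ltac:(lra)). pose proof (Rle_abs K). pose proof (Rabs_pos (y - x)).
  nra.
Qed.

Lemma has_deriv_within_continuous (D : R -> Prop) f x l :
  has_deriv_within D f x l -> continuous_within D f x.
Proof.
  intros Hf. apply continuous_within_of_local_lipschitz.
  destruct (Hf 1 Rlt_0_1) as [d [Hd Hq]].
  exists d, (Rabs l + 1); split; [exact Hd|]. intros y Dy Hy.
  destruct (Req_dec y x) as [->|Hne].
  { rewrite !Rminus_diag, Rabs_R0, Rmult_0_r. lra. }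
  assert (Hyx : 0 < Rabs (y - x)) by (apply Rabs_pos_lt; lra).
  specialize (Hq y Dy (conj Hyx Hy)).
  replace (f y - f x) with (((f y - f x) / (y - x) - l + l) * (y - x)) by (field; lra).
  rewrite Rabs_mult. apply Rmult_le_compat_r; [lra|].
  eapply Rle_trans; [apply Rabs_triang|]. lra.
Qed.

Lemma lipschitz_on_continuous_within (D : R -> Prop) f x :
  lipschitz_on D f -> D x -> continuous_within D f x.
Proof.
  intros [L HL] Dx. apply continuous_within_of_local_lipschitz.
  exists 1, L; split; [lra|]. intros y Dy _. now apply HL.
Qed.

Lemma is_derive_local_min h x l d : 0 < d -> is_derive h x l ->
  (forall y, x - d < y < x + d -> h x <= h y) -> l = 0.
Proof.
  intros Hd Hder Hmin. apply is_derive_Reals in Hder.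
  pose (pr := exist (fun l => derivable_pt_abs h x l) l Hder : derivable_pt h x).
  apply (deriv_minimum h (x - d) (x + d) x pr); [lra | lra |].
  intros y Hy1 Hy2. apply Hmin. lra.
Qed.

Lemma lipschitz_on_nonneg (D : R -> Prop) f : lipschitz_on D f ->
  exists L, 0 <= L /\ forall x y, D x -> D y -> Rabs (f x - f y) <= L * Rabs (x - y).
Proof.
  intros [L HL]. exists (Rabs L). split; [apply Rabs_pos|]. intros x y Hx Hy.
  eapply Rle_trans; [now apply HL|]. apply Rmult_le_compat_r; [apply Rabs_pos | apply Rle_abs].
Qed.

Lemma lipschitz_on_ext (D : R -> Prop) f h :
  (forall x, D x -> f x = h x) -> lipschitz_on D f -> lipschitz_on D h.
Proof. intros Heq [L HL]. exists L. intros x y Hx Hy. rewrite <- !Heq by assumption. auto. Qed.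

Lemma lipschitz_on_subset (D D' : R -> Prop) f :
  (forall x, D' x -> D x) -> lipschitz_on D f -> lipschitz_on D' f.
Proof. intros Hsub [L HL]. exists L. auto. Qed.

Lemma lipschitz_on_const (D : R -> Prop) c : lipschitz_on D (fun _ => c).
Proof. exists 0. intros. rewrite Rminus_diag, Rabs_R0. lra. Qed.

Lemma lipschitz_on_id (D : R -> Prop) : lipschitz_on D (fun x => x).
Proof. exists 1. intros. lra. Qed.

Lemma lipschitz_on_plus (D : R -> Prop) f h :
  lipschitz_on D f -> lipschitz_on D h -> lipschitz_on D (fun x => f x + h x).
Proof.
  intros [Lf Hf] [Lh Hh]. exists (Lf + Lh). intros x y Hx Hy.
  replace (f x + h x - (f y + h y)) with ((f x - f y) + (h x - h y)) by ring.
  eapply Rle_trans; [apply Rabs_triang|]. specialize (Hf x y Hx Hy). specialize (Hh x y Hx Hy).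
  lra.
Qed.

Lemma lipschitz_on_opp (D : R -> Prop) f :
  lipschitz_on D f -> lipschitz_on D (fun x => - f x).
Proof.
  intros [L HL]. exists L. intros x y Hx Hy.
  replace (- f x - - f y) with (- (f x - f y)) by ring. rewrite Rabs_Ropp. auto.
Qed.

Lemma lipschitz_on_minus (D : R -> Prop) f h :
  lipschitz_on D f -> lipschitz_on D h -> lipschitz_on D (fun x => f x - h x).
Proof. intros. apply lipschitz_on_plus; [|apply lipschitz_on_opp]; assumption. Qed.

Lemma lipschitz_on_div_const (D : R -> Prop) f c :
  lipschitz_on D f -> lipschitz_on D (fun x => f x / c).
Proof.
  intros [L HL]. exists (L * Rabs (/ c)). intros x y Hx Hy.
  replace (f x / c - f y / c) with ((f x - f y) * / c) by (unfold Rdiv; ring).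
  rewrite Rabs_mult.
  replace (L * Rabs (/ c) * Rabs (x - y)) with (L * Rabs (x - y) * Rabs (/ c)) by ring.
  apply Rmult_le_compat_r; [apply Rabs_pos | auto].
Qed.

Section Compact_interval.

Variables a b : R.

Local Notation I := (fun y => a <= y <= b).

(* Extending by constants outside [a, b] turns hypotheses within [a, b] into the two-sided
   ones required by Stdlib's extreme value and mean value theorems. *)
Definition clamp (x : R) : R := Rmax a (Rmin b x).

Lemma clamp_in x : a <= b -> I (clamp x).
Proof. intros. unfold clamp, Rmax, Rmin. repeat destruct Rle_dec; lra. Qed.

Lemma clamp_id x : I x -> clamp x = x.
Proof. intros. unfold clamp, Rmax, Rmin. repeat destruct Rle_dec; lra. Qed.

Lemma clamp_contraction x y : Rabs (clamp x - clamp y) <= Rabs (x - y).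
Proof.
  unfold clamp, Rmax, Rmin, Rabs.
  repeat (destruct Rle_dec || destruct Rcase_abs); lra.
Qed.

Lemma clamp_locally_id z : a < z < b -> locally z (fun t => clamp t = t).
Proof.
  intros Hz.
  assert (Hd : 0 < Rmin (z - a) (b - z)) by (apply Rmin_glb_lt; lra).
  exists (mkposreal _ Hd). intros t Ht. apply clamp_id.
  change (Rabs (t - z) < Rmin (z - a) (b - z)) in Ht. apply Rabs_lt_between in Ht.
  pose proof (Rmin_l (z - a) (b - z)). pose proof (Rmin_r (z - a) (b - z)). lra.
Qed.

Lemma continuity_pt_clamp f : a <= b ->
  (forall x, I x -> continuous_within I f x) ->
  forall c, continuity_pt (fun x => f (clamp x)) c.
Proof.
  intros Hab Hf c eps Heps.
  destruct (Hf (clamp c) (clamp_in c Hab) eps Heps) as [d [Hd Hc]].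
  exists d; split; [exact Hd|]. intros x [_ Hx]. simpl in *. unfold R_dist in *.
  apply Hc; [now apply clamp_in|].
  eapply Rle_lt_trans; [apply clamp_contraction | exact Hx].
Qed.

Lemma continuous_within_bounded f :
  (forall x, I x -> continuous_within I f x) ->
  exists M, forall x, I x -> Rabs (f x) <= M.
Proof.
  intros Hf. destruct (Rle_dec a b) as [Hab|Hab].
  2: { exists 0. intros x Hx. lra. }
  pose proof (continuity_pt_clamp f Hab Hf) as Hc.
  destruct (continuity_ab_maj _ a b Hab (fun c _ => Hc c)) as [x1 [H1 _]].
  destruct (continuity_ab_min _ a b Hab (fun c _ => Hc c)) as [x2 [H2 _]].
  exists (Rabs (f (clamp x1)) + Rabs (f (clamp x2))). intros x Hx.
  specialize (H1 x Hx). specialize (H2 x Hx). rewrite (clamp_id x Hx) in H1, H2.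
  unfold Rabs; repeat destruct Rcase_abs; lra.
Qed.

Lemma continuous_within_pos_lower_bound f :
  (forall x, I x -> continuous_within I f x) -> (forall x, I x -> 0 < f x) ->
  exists c, 0 < c /\ forall x, I x -> c <= f x.
Proof.
  intros Hf Hpos. destruct (Rle_dec a b) as [Hab|Hab].
  2: { exists 1. split; [lra|]. intros x Hx. lra. }
  pose proof (continuity_pt_clamp f Hab Hf) as Hc.
  destruct (continuity_ab_min _ a b Hab (fun c _ => Hc c)) as [x0 [H0 _]].
  exists (f (clamp x0)); split; [apply Hpos, clamp_in, Hab|].
  intros x Hx. specialize (H0 x Hx). now rewrite (clamp_id x Hx) in H0.
Qed.

Lemma has_deriv_within_interior f x l :
  a < x < b -> has_deriv_within I f x l -> is_derive f x l.
Proof.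
  intros Hx Hf. apply is_derive_Reals. intros eps Heps.
  destruct (Hf eps Heps) as [d [Hd Hq]].
  assert (Hd' : 0 < Rmin d (Rmin (x - a) (b - x))) by (repeat apply Rmin_glb_lt; lra).
  exists (mkposreal _ Hd'). simpl. intros h Hh0 Hh.
  pose proof (Rmin_l d (Rmin (x - a) (b - x))). pose proof (Rmin_r d (Rmin (x - a) (b - x))).
  pose proof (Rmin_l (x - a) (b - x)). pose proof (Rmin_r (x - a) (b - x)).
  apply Rabs_lt_between in Hh as Hh'.
  specialize (Hq (x + h)). replace (x + h - x) with h in Hq by ring.
  apply Hq; [lra|]. split; [now apply Rabs_pos_lt | lra].
Qed.

Lemma lipschitz_of_bounded_deriv f f' M :
  (forall x, I x -> has_deriv_within I f x (f' x)) ->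
  (forall x, I x -> Rabs (f' x) <= M) ->
  lipschitz_on I f.
Proof.
  intros Hd HM. exists M. intros x y Hx Hy.
  assert (Hab : a <= b) by lra.
  assert (Hc : forall c, continuity_pt (fun z => f (clamp z)) c).
  { apply continuity_pt_clamp; [exact Hab|].
    intros z Hz. eapply has_deriv_within_continuous, Hd, Hz. }
  destruct (MVT_gen (fun z => f (clamp z)) y x f') as [c [Hcxy Hmvt]].
  - intros z Hz.
    assert (Hz' : a < z < b).
    { unfold Rmin, Rmax in Hz. destruct Rle_dec; lra. }
    apply (is_derive_ext_loc f); [|now apply has_deriv_within_interior, Hd; lra].
    apply (filter_imp (fun t => clamp t = t)); [intros t ->; reflexivity|].
    now apply clamp_locally_id.
  - intros z _. apply Hc.
  - simpl in Hmvt. rewrite !clamp_id in Hmvt by assumption.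
    rewrite Hmvt, Rabs_mult. apply Rmult_le_compat_r; [apply Rabs_pos|].
    apply HM. unfold Rmin, Rmax in Hcxy. destruct Rle_dec; lra.
Qed.

Lemma lipschitz_on_bounded f :
  lipschitz_on I f -> exists M, 0 <= M /\ forall x, I x -> Rabs (f x) <= M.
Proof.
  intros [L HL]. destruct (Rle_dec a b) as [Hab|Hab].
  2: { exists 0. split; [lra|]. intros x Hx. lra. }
  exists (Rabs (f a) + Rabs L * (b - a)).
  split; [pose proof (Rabs_pos (f a)); pose proof (Rabs_pos L); nra|].
  intros x Hx. specialize (HL x a Hx ltac:(lra)).
  replace (f x) with (f a + (f x - f a)) by ring.
  eapply Rle_trans; [apply Rabs_triang|]. apply Rplus_le_compat_l.
  eapply Rle_trans; [exact HL|]. rewrite (Rabs_pos_eq (x - a)) by lra.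
  apply Rle_trans with (Rabs L * (x - a)).
  - apply Rmult_le_compat_r; [lra | apply Rle_abs].
  - apply Rmult_le_compat_l; [apply Rabs_pos | lra].
Qed.

Lemma lipschitz_on_mult f h :
  lipschitz_on I f -> lipschitz_on I h -> lipschitz_on I (fun x => f x * h x).
Proof.
  intros Hf Hh.
  destruct (lipschitz_on_bounded f Hf) as [Mf [HMf Bf]].
  destruct (lipschitz_on_bounded h Hh) as [Mh [HMh Bh]].
  destruct (lipschitz_on_nonneg _ f Hf) as [Lf [HLf Af]].
  destruct (lipschitz_on_nonneg _ h Hh) as [Lh [HLh Ah]].
  exists (Mf * Lh + Mh * Lf). intros x y Hx Hy.
  replace (f x * h x - f y * h y) with (f x * (h x - h y) + h y * (f x - f y)) by ring.
  eapply Rle_trans; [apply Rabs_triang|]. rewrite !Rabs_mult, Rmult_plus_distr_r, !Rmult_assoc.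
  apply Rplus_le_compat; apply Rmult_le_compat; auto using Rabs_pos.
Qed.

Lemma lipschitz_on_sqr f : lipschitz_on I f -> lipschitz_on I (fun x => f x ^ 2).
Proof.
  intros Hf. apply (lipschitz_on_ext _ (fun x => f x * f x)); [intros; ring|].
  now apply lipschitz_on_mult.
Qed.

Lemma lipschitz_on_inv h :
  lipschitz_on I h -> (forall x, I x -> 0 < h x) -> lipschitz_on I (fun x => / h x).
Proof.
  intros Hh Hpos.
  destruct (continuous_within_pos_lower_bound h) as [c [Hc Hlow]]; [|exact Hpos|].
  { intros x Hx. now apply lipschitz_on_continuous_within. }
  destruct (lipschitz_on_nonneg _ h Hh) as [L [HL A]].
  exists (L / (c * c)). intros x y Hx Hy.
  pose proof (Hlow x Hx). pose proof (Hlow y Hy).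
  replace (/ h x - / h y) with ((h y - h x) * / (h x * h y)) by (field; lra).
  rewrite Rabs_mult, Rabs_minus_sym, (Rabs_pos_eq (/ _)) by (left; apply Rinv_0_lt_compat; nra).
  replace (L / (c * c) * Rabs (x - y)) with (L * Rabs (x - y) * / (c * c)) by (field; lra).
  apply Rmult_le_compat; auto using Rabs_pos.
  - left. apply Rinv_0_lt_compat. nra.
  - apply Rinv_le_contravar; nra.
Qed.

Lemma lipschitz_on_div f h :
  lipschitz_on I f -> lipschitz_on I h -> (forall x, I x -> 0 < h x) ->
  lipschitz_on I (fun x => f x / h x).
Proof. intros. apply lipschitz_on_mult; [assumption|]. now apply lipschitz_on_inv. Qed.

Lemma filterlim_at_right_of_continuous f h : a < b ->
  continuous_within I f a -> (forall y, a < y < b -> h y = f y) ->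
  filterlim h (at_right a) (locally (f a)).
Proof.
  intros Hab Hc Heq. apply filterlim_locally. intros eps.
  destruct (Hc eps (cond_pos eps)) as [d [Hd Hcd]].
  assert (Hd' : 0 < Rmin d (b - a)) by (apply Rmin_glb_lt; lra).
  exists (mkposreal _ Hd'). intros y Hy Hay.
  change (Rabs (y - a) < Rmin d (b - a)) in Hy.
  pose proof (Rmin_l d (b - a)). pose proof (Rmin_r d (b - a)).
  apply Rabs_lt_between in Hy as Hy'.
  rewrite Heq by lra. apply Hcd; lra.
Qed.

Lemma filterlim_at_left_of_continuous f h : a < b ->
  continuous_within I f b -> (forall y, a < y < b -> h y = f y) ->
  filterlim h (at_left b) (locally (f b)).
Proof.
  intros Hab Hc Heq. apply filterlim_locally. intros eps.
  destruct (Hc eps (cond_pos eps)) as [d [Hd Hcd]].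
  assert (Hd' : 0 < Rmin d (b - a)) by (apply Rmin_glb_lt; lra).
  exists (mkposreal _ Hd'). intros y Hy Hyb.
  change (Rabs (y - b) < Rmin d (b - a)) in Hy.
  pose proof (Rmin_l d (b - a)). pose proof (Rmin_r d (b - a)).
  apply Rabs_lt_between in Hy as Hy'.
  rewrite Heq by lra. apply Hcd; lra.
Qed.

End Compact_interval.

(* Leaves, and positivity of non-constant denominators, are taken from the context. *)
Ltac lipschitz :=
  repeat match goal with
  | |- lipschitz_on _ (fun _ => _) => apply lipschitz_on_const
  | |- lipschitz_on _ (fun x => x) => apply lipschitz_on_id
  | |- lipschitz_on ?D (fun x => @?f x + @?h x) => apply (lipschitz_on_plus D f h)
  | |- lipschitz_on ?D (fun x => @?f x - @?h x) => apply (lipschitz_on_minus D f h)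
  | |- lipschitz_on ?D (fun x => - @?f x) => apply (lipschitz_on_opp D f)
  | |- lipschitz_on _ (fun x => @?f x * @?h x) => apply (lipschitz_on_mult _ _ f h)
  | |- lipschitz_on _ (fun x => @?f x ^ 2) => apply (lipschitz_on_sqr _ _ f)
  | |- lipschitz_on ?D (fun x => @?f x / ?c) => apply (lipschitz_on_div_const D f c)
  | |- lipschitz_on _ (fun x => @?f x / @?h x) => apply (lipschitz_on_div _ _ f h)
  | |- _ => assumption
  end.

(** * The objective of (G2) as a quadratic polynomial *)

Lemma pos_mult_sqr_eq_0 a x : 0 < a -> a * x ^ 2 = 0 -> x = 0.
Proof.
  intros Ha H. apply Rmult_integral in H as [H|H]; [lra|].
  apply Rsqr_0_uniq. now rewrite Rsqr_pow2.
Qed.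

Section Reduced_objective.

Variables rho mu1 mu2 sig1 sig2 q delta sg : R.

Definition m_of_theta1 (t s1 s2 : R) : R :=
  (1 - rho^2) * (s1 + sig1) * (t - rho * (sig2 * s2 - mu2) / ((1 - rho^2) * sig2))
  + mu2 * s2 / sig2 - mu1 - s1 * sig1 - / 2 * (s1^2 + s2^2).

Lemma theta1_m_of_theta1 t s1 s2 : sig2 <> 0 -> 1 - rho^2 <> 0 -> s1 + sig1 <> 0 ->
  theta1 rho mu1 mu2 sig1 sig2 (m_of_theta1 t s1 s2) s1 s2 = t.
Proof. intros. unfold theta1, m_of_theta1. field. auto. Qed.

Lemma m_of_theta1_theta1 m s1 s2 : sig2 <> 0 -> 1 - rho^2 <> 0 -> s1 + sig1 <> 0 ->
  m_of_theta1 (theta1 rho mu1 mu2 sig1 sig2 m s1 s2) s1 s2 = m.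
Proof. intros. unfold theta1, m_of_theta1. field. auto. Qed.

Lemma m_eq_of_theta1_eq m s1 s2 t : sig2 <> 0 -> 1 - rho^2 <> 0 -> s1 + sig1 <> 0 ->
  theta1 rho mu1 mu2 sig1 sig2 m s1 s2 = t -> m = m_of_theta1 t s1 s2.
Proof. intros ? ? ? <-. symmetry. now apply m_of_theta1_theta1. Qed.

(* The objective of (G2) in the coordinates (theta1, s1, s2); [k] stands for x / g'(x). *)
Definition reduced_objective (k X G t s1 s2 : R) : R :=
  let t2 := mu2 / sig2 - rho * t in
  - ((1 + q) * delta - q * (1 + q) / 2 * (t^2 + t2^2 + 2 * rho * t * t2)) * G
  - (m_of_theta1 t s1 s2 + q * ((s1 + rho * s2) * t + (rho * s1 + s2) * t2)) * X
  + gammaF rho s1 s2 * k + sg.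

Definition reduced_objective_dtheta (X G t s1 : R) : R :=
  q * (1 + q) * G * (1 - rho^2) * t - X * (1 - rho^2) * ((1 + q) * s1 + sig1).

Definition reduced_objective_ds1 (k X t s1 s2 : R) : R :=
  - X * (1 - rho^2) * (1 + q) * t - X * ((1 + q) * rho * (mu2 / sig2) - sig1)
  + (X + k) * (s1 + rho * s2).

Definition reduced_objective_ds2 (k X s1 s2 : R) : R :=
  - X * ((1 + q) * (mu2 / sig2) - rho * sig1) + (X + k) * (s2 + rho * s1).

Definition reduced_objective_quad (k X G v0 v1 v2 : R) : R :=
  q * (1 + q) * G * (1 - rho^2) / 2 * v0^2 - X * (1 - rho^2) * (1 + q) * v0 * v1
  + (X + k) * gammaF rho v1 v2.

Lemma reduced_objective_taylor k X G t s1 s2 t' s1' s2' :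
  sig2 <> 0 -> 1 - rho^2 <> 0 ->
  reduced_objective k X G t' s1' s2' =
  reduced_objective k X G t s1 s2
  + (t' - t) * reduced_objective_dtheta X G t s1
  + (s1' - s1) * reduced_objective_ds1 k X t s1 s2
  + (s2' - s2) * reduced_objective_ds2 k X s1 s2
  + reduced_objective_quad k X G (t' - t) (s1' - s1) (s2' - s2).
Proof.
  intros. unfold reduced_objective, reduced_objective_dtheta, reduced_objective_ds1,
    reduced_objective_ds2, reduced_objective_quad, m_of_theta1, gammaF.
  field. auto.
Qed.

Lemma reduced_objective_quad_sos k X G v0 v1 v2 :
  2 * (q * (1 + q) * G) * reduced_objective_quad k X G v0 v1 v2 =
  (1 - rho^2) * (q * (1 + q) * G * v0 - X * (1 + q) * v1)^2
  + (1 - rho^2) * (q * (1 + q) * G * (X + k) - X^2 * (1 + q)^2) * v1^2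
  + q * (1 + q) * G * (X + k) * (v2 + rho * v1)^2.
Proof. unfold reduced_objective_quad, gammaF. field. Qed.

Lemma reduced_objective_quad_pos_def k X G v0 v1 v2 :
  -1 < rho < 1 -> 0 < q * (1 + q) * G -> 0 < X + k ->
  0 < q * (1 + q) * G * (X + k) - X^2 * (1 + q)^2 ->
  0 <= reduced_objective_quad k X G v0 v1 v2 /\
  (reduced_objective_quad k X G v0 v1 v2 = 0 -> v0 = 0 /\ v1 = 0 /\ v2 = 0).
Proof.
  intros Hrho HA HK HE.
  pose proof (reduced_objective_quad_sos k X G v0 v1 v2) as Hsos.
  set (w := q * (1 + q) * G * v0 - X * (1 + q) * v1) in Hsos.
  assert (HD : 0 < 1 - rho^2) by nra.
  assert (HDE : 0 < (1 - rho^2) * (q * (1 + q) * G * (X + k) - X^2 * (1 + q)^2)) by nra.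
  assert (HAK : 0 < q * (1 + q) * G * (X + k)) by nra.
  pose proof (Rmult_le_pos _ _ (Rlt_le _ _ HD) (pow2_ge_0 w)).
  pose proof (Rmult_le_pos _ _ (Rlt_le _ _ HDE) (pow2_ge_0 v1)).
  pose proof (Rmult_le_pos _ _ (Rlt_le _ _ HAK) (pow2_ge_0 (v2 + rho * v1))).
  split.
  - apply Rmult_le_reg_l with (2 * (q * (1 + q) * G)); lra.
  - intros Hzero. rewrite Hzero, Rmult_0_r in Hsos.
    assert (v1 = 0) by (apply (pos_mult_sqr_eq_0 _ _ HDE); lra). subst v1.
    assert (v2 + rho * 0 = 0) by (apply (pos_mult_sqr_eq_0 _ _ HAK); lra).
    assert (w = 0) by (apply (pos_mult_sqr_eq_0 _ _ HD); lra). unfold w in *.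
    split; [nra | split; lra].
Qed.

Lemma reduced_objective_strict_min k X G t s1 s2 :
  -1 < rho < 1 -> sig2 <> 0 ->
  0 < q * (1 + q) * G -> 0 < X + k ->
  0 < q * (1 + q) * G * (X + k) - X^2 * (1 + q)^2 ->
  reduced_objective_dtheta X G t s1 = 0 ->
  reduced_objective_ds1 k X t s1 s2 = 0 ->
  reduced_objective_ds2 k X s1 s2 = 0 ->
  forall t' s1' s2',
    reduced_objective k X G t s1 s2 <= reduced_objective k X G t' s1' s2' /\
    (reduced_objective k X G t' s1' s2' = reduced_objective k X G t s1 s2 ->
     t' = t /\ s1' = s1 /\ s2' = s2).
Proof.
  intros Hrho Hsig2 HA HK HE H0 H1 H2 t' s1' s2'.
  rewrite (reduced_objective_taylor k X G t s1 s2 t' s1' s2'), H0, H1, H2 by (auto; nra).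
  destruct (reduced_objective_quad_pos_def k X G (t' - t) (s1' - s1) (s2' - s2) Hrho HA HK HE)
    as [Hpos Hdef].
  split; [lra|]. intros Heq. destruct Hdef as [? [? ?]]; [lra|]. lra.
Qed.

Lemma reduced_objective_strict_min_theta k X G t s1 s2 :
  -1 < rho < 1 -> sig2 <> 0 -> 0 < q * (1 + q) * G ->
  reduced_objective_dtheta X G t s1 = 0 ->
  forall t',
    reduced_objective k X G t s1 s2 <= reduced_objective k X G t' s1 s2 /\
    (reduced_objective k X G t' s1 s2 = reduced_objective k X G t s1 s2 -> t' = t).
Proof.
  intros Hrho Hsig2 HA H0 t'.
  rewrite (reduced_objective_taylor k X G t s1 s2 t' s1 s2), H0 by (auto; nra).
  replace (reduced_objective_quad k X G (t' - t) (s1 - s1) (s2 - s2))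
    with (q * (1 + q) * G * (1 - rho^2) / 2 * (t' - t)^2)
    by (unfold reduced_objective_quad, gammaF; ring).
  assert (0 < 1 - rho^2) by nra.
  assert (Hc : 0 < q * (1 + q) * G * (1 - rho^2) / 2)
    by (apply Rdiv_lt_0_compat; [apply Rmult_lt_0_compat|]; lra).
  pose proof (Rmult_le_pos _ _ (Rlt_le _ _ Hc) (pow2_ge_0 (t' - t))).
  split; [lra|]. intros Heq.
  assert (t' - t = 0) by (apply (pos_mult_sqr_eq_0 _ _ Hc); lra). lra.
Qed.

(* Closed-form critical point of [reduced_objective] for k = X / G1.  The [_ratio]s are s1
   and s2 divided by G1; they stay meaningful at the end points, where G1 = 0. *)
Definition opt_denominator (X G G1 : R) : R := q * G * (G1 + 1) - (1 + q) * X * G1.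

Definition opt_s1_ratio (X G G1 : R) : R := sig1 * (X - q * G) / opt_denominator X G G1.

Definition opt_s2_ratio (X G G1 : R) : R :=
  ((1 + q) * (mu2 / sig2) - rho * sig1) / (G1 + 1) - rho * opt_s1_ratio X G G1.

Definition opt_s1 (X G G1 : R) : R := G1 * opt_s1_ratio X G G1.

Definition opt_s2 (X G G1 : R) : R := G1 * opt_s2_ratio X G G1.

Definition opt_theta1 (X G G1 : R) : R :=
  X * ((1 + q) * opt_s1 X G G1 + sig1) / (q * (1 + q) * G).

Definition opt_m (X G G1 : R) : R :=
  m_of_theta1 (opt_theta1 X G G1) (opt_s1 X G G1) (opt_s2 X G G1).

Section Stationarity.

Variables X G G1 : R.
Hypotheses (HqG : q * G <> 0) (Hq1 : 1 + q <> 0).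

Lemma dtheta_opt : reduced_objective_dtheta X G (opt_theta1 X G G1) (opt_s1 X G G1) = 0.
Proof.
  unfold reduced_objective_dtheta, opt_theta1.
  assert (G <> 0) by (intros ->; apply HqG; ring).
  assert (q <> 0) by (intros ->; apply HqG; ring).
  field. auto.
Qed.

Hypotheses (Hsig2 : sig2 <> 0) (Hden : opt_denominator X G G1 <> 0)
  (HG1 : G1 <> 0) (HG11 : G1 + 1 <> 0).

Lemma ds1_opt :
  reduced_objective_ds1 (X / G1) X (opt_theta1 X G G1) (opt_s1 X G G1) (opt_s2 X G G1) = 0.
Proof.
  unfold reduced_objective_ds1, opt_theta1, opt_s1, opt_s2, opt_s2_ratio, opt_s1_ratio.
  unfold opt_denominator in *.
  assert (G <> 0) by (intros ->; apply HqG; ring).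
  assert (q <> 0) by (intros ->; apply HqG; ring).
  field. repeat split; auto.
Qed.

Lemma ds2_opt :
  reduced_objective_ds2 (X / G1) X (opt_s1 X G G1) (opt_s2 X G G1) = 0.
Proof.
  unfold reduced_objective_ds2, opt_s1, opt_s2, opt_s2_ratio, opt_s1_ratio.
  unfold opt_denominator in *.
  field. repeat split; auto.
Qed.

End Stationarity.

Lemma opt_s1_shift X G G1 : opt_denominator X G G1 <> 0 ->
  opt_s1 X G G1 + sig1 = sig1 * (q * (G - X * G1)) / opt_denominator X G G1.
Proof. intros. unfold opt_s1, opt_s1_ratio. unfold opt_denominator in *. field. auto. Qed.

End Reduced_objective.

Lemma one_plus_qof_pos p : p < 1 -> 0 < 1 + qof p.
Proof.
  intros. unfold qof. replace (1 + p / (1 - p)) with (/ (1 - p)) by (field; lra).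
  apply Rinv_0_lt_compat. lra.
Qed.

Lemma gammaF_eq_0 rho s1 s2 : -1 < rho < 1 -> gammaF rho s1 s2 = 0 -> s1 = 0 /\ s2 = 0.
Proof.
  intros Hrho H. unfold gammaF in H.
  assert (HD : 0 < 1 - rho^2) by nra.
  assert (Hsos : (1 - rho^2) * s1^2 + 1 * (s2 + rho * s1)^2 = 0) by nra.
  pose proof (Rmult_le_pos _ _ (Rlt_le _ _ HD) (pow2_ge_0 s1)).
  pose proof (pow2_ge_0 (s2 + rho * s1)).
  assert (s1 = 0) by (apply (pos_mult_sqr_eq_0 _ _ HD); lra). subst s1.
  assert (s2 + rho * 0 = 0) by (apply (pos_mult_sqr_eq_0 1); lra). split; lra.
Qed.

Section Objective.

Variables rho mu1 mu2 sig1 sig2 p delta : R.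

Local Notation objective := (objG rho mu1 mu2 sig1 sig2 p delta).
Local Notation reduced :=
  (reduced_objective rho mu1 mu2 sig1 sig2 (qof p) delta (sgnR p)).

Lemma objG_eq_reduced X G k m s1 s2 :
  sig2 <> 0 -> 1 - rho^2 <> 0 -> s1 + sig1 <> 0 ->
  - alphaF rho mu1 mu2 sig1 sig2 p delta m s1 s2 * G
  - (m + betaF rho mu1 mu2 sig1 sig2 p m s1 s2) * X + sgnR p + gammaF rho s1 s2 * k
  = reduced k X G (theta1 rho mu1 mu2 sig1 sig2 m s1 s2) s1 s2.
Proof.
  intros. unfold reduced_objective, alphaF, betaF, theta2. cbv zeta.
  rewrite m_of_theta1_theta1 by assumption. ring.
Qed.

Lemma objG_value X G G1 m s1 s2 : G1 <> 0 ->
  objective X G G1 m s1 s2 =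
  Finite (- alphaF rho mu1 mu2 sig1 sig2 p delta m s1 s2 * G
          - (m + betaF rho mu1 mu2 sig1 sig2 p m s1 s2) * X + sgnR p
          + gammaF rho s1 s2 * (X / G1)).
Proof. intros. unfold objG. cbv zeta. destruct (Req_EM_T G1 0); [contradiction | reflexivity]. Qed.

Lemma objG_nonzero_slope X G G1 m s1 s2 :
  sig2 <> 0 -> 1 - rho^2 <> 0 -> s1 + sig1 <> 0 -> G1 <> 0 ->
  objective X G G1 m s1 s2 =
  Finite (reduced (X / G1) X G (theta1 rho mu1 mu2 sig1 sig2 m s1 s2) s1 s2).
Proof. intros. rewrite objG_value by assumption. f_equal. now apply objG_eq_reduced. Qed.

Lemma objG_zero_slope X G m s1 s2 :
  sig2 <> 0 -> 1 - rho^2 <> 0 -> s1 + sig1 <> 0 -> gammaF rho s1 s2 = 0 ->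
  objective X G 0 m s1 s2 =
  Finite (reduced 0 X G (theta1 rho mu1 mu2 sig1 sig2 m s1 s2) s1 s2).
Proof.
  intros ? ? ? Hg. rewrite <- objG_eq_reduced by assumption. unfold objG. cbv zeta.
  destruct (Req_EM_T 0 0); [|contradiction]. rewrite Hg.
  destruct (Req_EM_T 0 0); [|contradiction]. f_equal. ring.
Qed.

Lemma objG_zero_slope_infinite X G m s1 s2 :
  gammaF rho s1 s2 <> 0 -> objective X G 0 m s1 s2 = p_infty.
Proof.
  intros Hg. unfold objG. cbv zeta.
  destruct (Req_EM_T 0 0); [|contradiction].
  destruct (Req_EM_T (gammaF rho s1 s2) 0); [contradiction | reflexivity].
Qed.

End Objective.

Definition strict_minimizer (sig1 : R) (F : R -> R -> R -> Rbar) (m s1 s2 : R) : Prop :=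
  s1 <> - sig1 /\
  forall m' s1' s2', s1' <> - sig1 ->
    Rbar_le (F m s1 s2) (F m' s1' s2') /\
    (F m' s1' s2' = F m s1 s2 -> m' = m /\ s1' = s1 /\ s2' = s2).

Lemma strict_minimizer_inf_is_zero sig1 F m s1 s2 :
  inf_is_zero sig1 F -> strict_minimizer sig1 F m s1 s2 ->
  F m s1 s2 = Finite 0 /\
  forall m' s1' s2', s1' <> - sig1 -> F m' s1' s2' = Finite 0 ->
    m' = m /\ s1' = s1 /\ s2' = s2.
Proof.
  intros [Hge Hlt] [Hs1 Hmin].
  assert (Hup : forall eps, 0 < eps -> Rbar_lt (F m s1 s2) (Finite eps)).
  { intros eps Heps. destruct (Hlt eps Heps) as [m' [s1' [s2' [Hs1' Hlt']]]].
    exact (Rbar_le_lt_trans _ _ _ (proj1 (Hmin m' s1' s2' Hs1')) Hlt'). }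
  assert (Hzero : F m s1 s2 = Finite 0).
  { specialize (Hge m s1 s2 Hs1). revert Hge Hup.
    destruct (F m s1 s2) as [v| |]; simpl; intros Hge Hup.
    - f_equal. apply Rle_antisym; [|exact Hge]. apply Rnot_lt_le. intros Hv.
      specialize (Hup v Hv). simpl in Hup. lra.
    - destruct (Hup 1 Rlt_0_1).
    - contradiction. }
  split; [exact Hzero|]. intros m' s1' s2' Hs1' H0.
  apply (Hmin m' s1' s2' Hs1'). congruence.
Qed.

Lemma objG_strict_minimizer_zero_slope rho mu1 mu2 sig1 sig2 p delta X G :
  -1 < rho < 1 -> 0 < sig1 -> 0 < sig2 -> p < 1 -> 0 < qof p * G ->
  strict_minimizer sig1 (objG rho mu1 mu2 sig1 sig2 p delta X G 0)
    (opt_m rho mu1 mu2 sig1 sig2 (qof p) X G 0) (opt_s1 sig1 (qof p) X G 0)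
    (opt_s2 rho mu2 sig1 sig2 (qof p) X G 0).
Proof.
  intros Hrho Hsig1 Hsig2 Hp HqG.
  pose proof (one_plus_qof_pos p Hp) as Hq1.
  assert (HD : 1 - rho^2 <> 0) by nra.
  set (q := qof p) in *.
  assert (HA : 0 < q * (1 + q) * G)
    by (replace (q * (1 + q) * G) with ((1 + q) * (q * G)) by ring; now apply Rmult_lt_0_compat).
  pose proof (dtheta_opt rho sig1 q X G 0 ltac:(lra) ltac:(lra)) as Hd.
  assert (Hs1 : opt_s1 sig1 q X G 0 = 0) by (unfold opt_s1; ring).
  assert (Hs2 : opt_s2 rho mu2 sig1 sig2 q X G 0 = 0) by (unfold opt_s2; ring).
  unfold opt_m. rewrite Hs1, Hs2 in *.
  split; [lra|]. intros m' s1' s2' Hs1'.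
  rewrite objG_zero_slope, theta1_m_of_theta1 by (unfold gammaF; lra || ring).
  destruct (Req_EM_T (gammaF rho s1' s2') 0) as [Hg|Hg].
  2: { rewrite objG_zero_slope_infinite by exact Hg. split; [exact I | discriminate]. }
  destruct (gammaF_eq_0 rho s1' s2' Hrho Hg) as [-> ->].
  rewrite objG_zero_slope by (lra || assumption).
  destruct (reduced_objective_strict_min_theta rho mu1 mu2 sig1 sig2 q delta (sgnR p)
    0 X G _ 0 0 Hrho ltac:(lra) HA Hd (theta1 rho mu1 mu2 sig1 sig2 m' 0 0)) as [Hle Heq].
  split; [exact Hle|]. intros E. injection E as E.
  split; [|split; reflexivity]. apply m_eq_of_theta1_eq, Heq, E; lra.
Qed.

Lemma objG_strict_minimizer_nonzero_slope rho mu1 mu2 sig1 sig2 p delta X G G1 :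
  -1 < rho < 1 -> 0 < sig1 -> 0 < sig2 -> p < 1 ->
  0 < qof p * G -> 0 < opt_denominator (qof p) X G G1 -> 0 < G1 + 1 ->
  0 < qof p * (G - X * G1) -> 0 < G1 / X ->
  strict_minimizer sig1 (objG rho mu1 mu2 sig1 sig2 p delta X G G1)
    (opt_m rho mu1 mu2 sig1 sig2 (qof p) X G G1) (opt_s1 sig1 (qof p) X G G1)
    (opt_s2 rho mu2 sig1 sig2 (qof p) X G G1).
Proof.
  intros Hrho Hsig1 Hsig2 Hp HqG Hden HG11 HqGX Hslope.
  pose proof (one_plus_qof_pos p Hp) as Hq1.
  assert (HD : 1 - rho^2 <> 0) by nra.
  set (q := qof p) in *.
  assert (HA : 0 < q * (1 + q) * G)
    by (replace (q * (1 + q) * G) with ((1 + q) * (q * G)) by ring; now apply Rmult_lt_0_compat).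
  assert (HG1 : G1 <> 0) by (intros ->; unfold Rdiv in Hslope; lra).
  assert (HX : X <> 0) by (intros ->; unfold Rdiv in Hslope; rewrite Rinv_0 in Hslope; lra).
  assert (Hk : 0 < X / G1)
    by (replace (X / G1) with (/ (G1 / X)) by (field; auto); now apply Rinv_0_lt_compat).
  assert (HK : 0 < X + X / G1)
    by (replace (X + X / G1) with (X / G1 * (G1 + 1)) by (field; auto); nra).
  assert (HE : 0 < q * (1 + q) * G * (X + X / G1) - X^2 * (1 + q)^2).
  { replace (q * (1 + q) * G * (X + X / G1) - X^2 * (1 + q)^2)
      with ((1 + q) * (X / G1) * opt_denominator q X G G1)
      by (unfold opt_denominator; field; auto).
    apply Rmult_lt_0_compat; [apply Rmult_lt_0_compat|]; lra. }
  assert (Hs1 : 0 < opt_s1 sig1 q X G G1 + sig1).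
  { rewrite opt_s1_shift by lra. apply Rdiv_lt_0_compat; [apply Rmult_lt_0_compat|]; lra. }
  split; [lra|]. intros m' s1' s2' Hs1'.
  unfold opt_m. rewrite !objG_nonzero_slope, theta1_m_of_theta1 by lra.
  destruct (reduced_objective_strict_min rho mu1 mu2 sig1 sig2 q delta (sgnR p)
    (X / G1) X G _ _ _ Hrho ltac:(lra) HA HK HE
    (dtheta_opt rho sig1 q X G G1 ltac:(lra) ltac:(lra))
    (ds1_opt rho mu2 sig1 sig2 q X G G1 ltac:(lra) ltac:(lra) ltac:(lra) ltac:(lra) HG1 ltac:(lra))
    (ds2_opt rho mu2 sig1 sig2 q X G G1 ltac:(lra) ltac:(lra) HG1 ltac:(lra))
    (theta1 rho mu1 mu2 sig1 sig2 m' s1' s2') s1' s2') as [Hle Heq].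
  split; [exact Hle|]. intros E. injection E as E.
  destruct (Heq E) as [Ht [-> ->]]. split; [|split; reflexivity].
  apply m_eq_of_theta1_eq, Ht; lra.
Qed.

Lemma objG_strict_minimizer rho mu1 mu2 sig1 sig2 p delta X G G1 :
  -1 < rho < 1 -> 0 < sig1 -> 0 < sig2 -> p < 1 ->
  0 < qof p * G -> 0 < opt_denominator (qof p) X G G1 -> 0 < G1 + 1 ->
  0 < qof p * (G - X * G1) -> G1 = 0 \/ 0 < G1 / X ->
  strict_minimizer sig1 (objG rho mu1 mu2 sig1 sig2 p delta X G G1)
    (opt_m rho mu1 mu2 sig1 sig2 (qof p) X G G1) (opt_s1 sig1 (qof p) X G G1)
    (opt_s2 rho mu2 sig1 sig2 (qof p) X G G1).
Proof.
  intros ? ? ? ? ? ? ? ? [-> | Hslope].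
  - now apply objG_strict_minimizer_zero_slope.
  - now apply objG_strict_minimizer_nonzero_slope.
Qed.

(** * The minimizer as a function of x *)

Section Corollary.

Variables rho mu1 mu2 sig1 sig2 p delta xl xu : R.
Variables g g1 g2 : R -> R.

Hypotheses (Hrho : -1 < rho < 1) (Hsig1 : 0 < sig1) (Hsig2 : 0 < sig2) (Hp : p < 1).
Hypotheses (Hxlu : xl < xu) (HC2 : C2_on xl xu g g1 g2).
Hypothesis HG2 : forall x, xl <= x <= xu ->
  inf_is_zero sig1 (objG rho mu1 mu2 sig1 sig2 p delta x (g x) (g1 x)).
Hypotheses (HG3a : g1 xl = 0) (HG3b : g1 xu = 0).
Hypothesis HG4 : forall x, xl <= x <= xu ->
  0 < qof p * g x /\
  0 < qof p * g x * (g1 x + 1) - (1 + qof p) * x * g1 x /\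
  0 < qof p * (g x - x * g1 x) /\
  0 < g1 x + 1.
Hypothesis HG5 : forall x, xl < x < xu -> 0 < g1 x / x.

Local Notation Icc := (fun x => xl <= x <= xu).
Local Notation Ioo := (fun x => xl < x < xu).
Local Notation q := (qof p).

Definition s1_hat (x : R) : R := opt_s1 sig1 q x (g x) (g1 x).
Definition s2_hat (x : R) : R := opt_s2 rho mu2 sig1 sig2 q x (g x) (g1 x).
Definition m_hat (x : R) : R := opt_m rho mu1 mu2 sig1 sig2 q x (g x) (g1 x).
Definition alpha_hat (x : R) : R :=
  alphaF rho mu1 mu2 sig1 sig2 p delta (m_hat x) (s1_hat x) (s2_hat x).
Definition beta_hat (x : R) : R := betaF rho mu1 mu2 sig1 sig2 p (m_hat x) (s1_hat x) (s2_hat x).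
Definition gamma_hat (x : R) : R := gammaF rho (s1_hat x) (s2_hat x).

Lemma g1_neq_0 x : Ioo x -> g1 x <> 0.
Proof. intros Hx E. specialize (HG5 x Hx). rewrite E in HG5. unfold Rdiv in HG5. lra. Qed.

Lemma minimizer_unique_zero x : Icc x ->
  s1_hat x <> - sig1 /\
  objG rho mu1 mu2 sig1 sig2 p delta x (g x) (g1 x) (m_hat x) (s1_hat x) (s2_hat x) = Finite 0 /\
  (forall m s1 s2, s1 <> - sig1 ->
     objG rho mu1 mu2 sig1 sig2 p delta x (g x) (g1 x) m s1 s2 = Finite 0 ->
     m = m_hat x /\ s1 = s1_hat x /\ s2 = s2_hat x).
Proof.
  intros Hx. destruct (HG4 x Hx) as [HqG [Hden [HqGX Hg11]]].
  assert (Hslope : g1 x = 0 \/ 0 < g1 x / x).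
  { destruct (Req_dec x xl) as [->|]; [now left|].
    destruct (Req_dec x xu) as [->|]; [now left|].
    right. apply HG5. lra. }
  pose proof (objG_strict_minimizer rho mu1 mu2 sig1 sig2 p delta x (g x) (g1 x)
    Hrho Hsig1 Hsig2 Hp HqG Hden Hg11 HqGX Hslope) as Hmin.
  split; [apply Hmin|]. exact (strict_minimizer_inf_is_zero _ _ _ _ _ (HG2 x Hx) Hmin).
Qed.

Lemma theta1_at_minimizer x : Icc x ->
  theta1 rho mu1 mu2 sig1 sig2 (m_hat x) (s1_hat x) (s2_hat x) = opt_theta1 sig1 q x (g x) (g1 x).
Proof.
  intros Hx. destruct (minimizer_unique_zero x Hx) as [Hs1 _].
  apply theta1_m_of_theta1; [lra | nra | lra].
Qed.

Lemma lipschitz_g1 : lipschitz_on Icc g1.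
Proof.
  destruct (continuous_within_bounded xl xu g2) as [M HM]; [intros x Hx; apply HC2, Hx|].
  apply (lipschitz_of_bounded_deriv xl xu g1 g2 M); [intros x Hx; apply HC2, Hx | exact HM].
Qed.

Lemma lipschitz_g : lipschitz_on Icc g.
Proof.
  destruct (lipschitz_on_bounded xl xu g1 lipschitz_g1) as [M [_ HM]].
  apply (lipschitz_of_bounded_deriv xl xu g g1 M); [intros x Hx; apply HC2, Hx | exact HM].
Qed.

Lemma lipschitz_opt_s1_ratio : lipschitz_on Icc (fun x => opt_s1_ratio sig1 q x (g x) (g1 x)).
Proof.
  assert (Hden : forall x, Icc x -> 0 < opt_denominator q x (g x) (g1 x)) by apply HG4.
  assert (Lden : lipschitz_on Icc (fun x => opt_denominator q x (g x) (g1 x))).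
  { unfold opt_denominator. pose proof lipschitz_g. pose proof lipschitz_g1. lipschitz. }
  unfold opt_s1_ratio. pose proof lipschitz_g. lipschitz.
Qed.

Lemma lipschitz_opt_s2_ratio :
  lipschitz_on Icc (fun x => opt_s2_ratio rho mu2 sig1 sig2 q x (g x) (g1 x)).
Proof.
  assert (Hg11 : forall x, Icc x -> 0 < g1 x + 1) by apply HG4.
  unfold opt_s2_ratio. pose proof lipschitz_g1. pose proof lipschitz_opt_s1_ratio. lipschitz.
Qed.

Lemma lipschitz_s1_hat : lipschitz_on Icc s1_hat.
Proof.
  unfold s1_hat, opt_s1. pose proof lipschitz_g1. pose proof lipschitz_opt_s1_ratio. lipschitz.
Qed.

Lemma lipschitz_s2_hat : lipschitz_on Icc s2_hat.
Proof.
  unfold s2_hat, opt_s2. pose proof lipschitz_g1. pose proof lipschitz_opt_s2_ratio. lipschitz.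
Qed.

Lemma lipschitz_opt_theta1 : lipschitz_on Icc (fun x => opt_theta1 sig1 q x (g x) (g1 x)).
Proof.
  assert (Hpos : forall x, Icc x -> 0 < q * (1 + q) * g x).
  { intros x Hx. pose proof (one_plus_qof_pos p Hp). destruct (HG4 x Hx) as [HqG _]. nra. }
  unfold opt_theta1. pose proof lipschitz_g. pose proof lipschitz_s1_hat. lipschitz.
Qed.

Lemma lipschitz_m_hat : lipschitz_on Icc m_hat.
Proof.
  unfold m_hat, opt_m, m_of_theta1.
  pose proof lipschitz_opt_theta1. pose proof lipschitz_s1_hat. pose proof lipschitz_s2_hat.
  lipschitz.
Qed.

Lemma lipschitz_theta1_hat :
  lipschitz_on Icc (fun x => theta1 rho mu1 mu2 sig1 sig2 (m_hat x) (s1_hat x) (s2_hat x)).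
Proof.
  apply (lipschitz_on_ext _ _ _ (fun x Hx => eq_sym (theta1_at_minimizer x Hx))).
  exact lipschitz_opt_theta1.
Qed.

Lemma lipschitz_theta2_hat :
  lipschitz_on Icc (fun x => theta2 rho mu1 mu2 sig1 sig2 (m_hat x) (s1_hat x) (s2_hat x)).
Proof. unfold theta2. pose proof lipschitz_theta1_hat. lipschitz. Qed.

Lemma lipschitz_alpha_hat : lipschitz_on Icc alpha_hat.
Proof.
  unfold alpha_hat, alphaF. cbv zeta.
  pose proof lipschitz_theta1_hat. pose proof lipschitz_theta2_hat. lipschitz.
Qed.

Lemma lipschitz_beta_hat : lipschitz_on Icc beta_hat.
Proof.
  unfold beta_hat, betaF. cbv zeta.
  pose proof lipschitz_theta1_hat. pose proof lipschitz_theta2_hat.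
  pose proof lipschitz_s1_hat. pose proof lipschitz_s2_hat. lipschitz.
Qed.

Lemma lipschitz_gamma_hat : lipschitz_on Icc gamma_hat.
Proof.
  unfold gamma_hat, gammaF. pose proof lipschitz_s1_hat. pose proof lipschitz_s2_hat. lipschitz.
Qed.

Lemma interior_in_interval x : Ioo x -> Icc x.
Proof. intros. lra. Qed.

Lemma lipschitz_s1_hat_div_g1 : lipschitz_on Ioo (fun x => s1_hat x / g1 x).
Proof.
  apply (lipschitz_on_ext _ (fun x => opt_s1_ratio sig1 q x (g x) (g1 x))).
  - intros x Hx. unfold s1_hat, opt_s1. field. now apply g1_neq_0.
  - exact (lipschitz_on_subset _ _ _ interior_in_interval lipschitz_opt_s1_ratio).
Qed.

Lemma lipschitz_s2_hat_div_g1 : lipschitz_on Ioo (fun x => s2_hat x / g1 x).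
Proof.
  apply (lipschitz_on_ext _ (fun x => opt_s2_ratio rho mu2 sig1 sig2 q x (g x) (g1 x))).
  - intros x Hx. unfold s2_hat, opt_s2. field. now apply g1_neq_0.
  - exact (lipschitz_on_subset _ _ _ interior_in_interval lipschitz_opt_s2_ratio).
Qed.

Lemma lipschitz_beta_hat_div_g1 : lipschitz_on Ioo (fun x => beta_hat x / g1 x).
Proof.
  apply (lipschitz_on_ext _ (fun x =>
    q * ((opt_s1_ratio sig1 q x (g x) (g1 x)
          + rho * opt_s2_ratio rho mu2 sig1 sig2 q x (g x) (g1 x))
         * theta1 rho mu1 mu2 sig1 sig2 (m_hat x) (s1_hat x) (s2_hat x)
         + (rho * opt_s1_ratio sig1 q x (g x) (g1 x)
            + opt_s2_ratio rho mu2 sig1 sig2 q x (g x) (g1 x))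
         * theta2 rho mu1 mu2 sig1 sig2 (m_hat x) (s1_hat x) (s2_hat x)))).
  - intros x Hx. unfold beta_hat, betaF. cbv zeta. unfold s1_hat, s2_hat, opt_s1, opt_s2.
    field. now apply g1_neq_0.
  - apply (lipschitz_on_subset Icc _ _ interior_in_interval).
    pose proof lipschitz_opt_s1_ratio. pose proof lipschitz_opt_s2_ratio.
    pose proof lipschitz_theta1_hat. pose proof lipschitz_theta2_hat. lipschitz.
Qed.

Lemma ode_interior x : Ioo x -> exists d,
  is_derive (fun y => y / g1 y) x d /\
  - alpha_hat x * g1 x - (m_hat x + beta_hat x) + gamma_hat x * d = 0.
Proof.
  intros Hx.
  assert (Hg : is_derive g x (g1 x))
    by (apply (has_deriv_within_interior xl xu); [|apply HC2]; lra).
  assert (Hg1 : is_derive g1 x (g2 x))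
    by (apply (has_deriv_within_interior xl xu); [|apply HC2]; lra).
  assert (Hslope : is_derive (fun y => y / g1 y) x ((1 * g1 x - x * g2 x) / g1 x ^ 2)).
  { apply is_derive_div; [exact (is_derive_id x) | exact Hg1 | now apply g1_neq_0]. }
  eexists; split; [exact Hslope|].
  set (h := fun y => - alpha_hat x * g y - (m_hat x + beta_hat x) * y
                     + gamma_hat x * (y / g1 y) + sgnR p).
  assert (Hh : is_derive h x (- alpha_hat x * g1 x - (m_hat x + beta_hat x)
                              + gamma_hat x * ((1 * g1 x - x * g2 x) / g1 x ^ 2))).
  { unfold h. auto_derive.
    - repeat split; [exists (g1 x) | exists (g2 x) | apply g1_neq_0]; assumption.
    - replace (Derive (fun y => g y) x) with (g1 x) by (symmetry; now apply is_derive_unique).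
      replace (Derive (fun y => g1 y) x) with (g2 x) by (symmetry; now apply is_derive_unique).
      field. now apply g1_neq_0. }
  apply (is_derive_local_min h x _ (Rmin (x - xl) (xu - x))); [apply Rmin_glb_lt; lra | exact Hh|].
  destruct (minimizer_unique_zero x (interior_in_interval x Hx)) as [Hs1 [Hzero _]].
  rewrite objG_value in Hzero by now apply g1_neq_0. injection Hzero as Hzero.
  intros y Hy. pose proof (Rmin_l (x - xl) (xu - x)). pose proof (Rmin_r (x - xl) (xu - x)).
  destruct (HG2 y ltac:(lra)) as [Hge _]. specialize (Hge (m_hat x) (s1_hat x) (s2_hat x) Hs1).
  rewrite objG_value in Hge by (apply g1_neq_0; lra). simpl in Hge.
  unfold h, alpha_hat, beta_hat, gamma_hat. lra.
Qed.

Lemma ode_rhs_interior x : Ioo x ->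
  gamma_hat x * Derive (fun y => y / g1 y) x = alpha_hat x * g1 x + (m_hat x + beta_hat x).
Proof.
  intros Hx. destruct (ode_interior x Hx) as [d [Hd Hode]].
  replace (Derive (fun y => y / g1 y) x) with d by (symmetry; now apply is_derive_unique). lra.
Qed.

Lemma continuous_ode_rhs x : Icc x ->
  continuous_within Icc (fun y => alpha_hat y * g1 y + (m_hat y + beta_hat y)) x.
Proof.
  apply lipschitz_on_continuous_within.
  pose proof lipschitz_alpha_hat. pose proof lipschitz_g1.
  pose proof lipschitz_m_hat. pose proof lipschitz_beta_hat. lipschitz.
Qed.

Lemma ode_left_end :
  filterlim (fun y => gamma_hat y * Derive (fun z => z / g1 z) y) (at_right xl)
    (locally (alpha_hat xl * g1 xl + (m_hat xl + beta_hat xl))).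
Proof.
  apply (filterlim_at_right_of_continuous xl xu
           (fun y => alpha_hat y * g1 y + (m_hat y + beta_hat y))).
  - exact Hxlu.
  - apply continuous_ode_rhs. lra.
  - exact ode_rhs_interior.
Qed.

Lemma ode_right_end :
  filterlim (fun y => gamma_hat y * Derive (fun z => z / g1 z) y) (at_left xu)
    (locally (alpha_hat xu * g1 xu + (m_hat xu + beta_hat xu))).
Proof.
  apply (filterlim_at_left_of_continuous xl xu
           (fun y => alpha_hat y * g1 y + (m_hat y + beta_hat y))).
  - exact Hxlu.
  - apply continuous_ode_rhs. lra.
  - exact ode_rhs_interior.
Qed.

End Corollary.

Theorem corollary4p2
  (rho mu1 mu2 sig1 sig2 lamU lamL p delta : R)
  (Hrho : -1 < rho < 1)
  (Hmu1 : 0 < mu1) (Hmu2 : 0 < mu2) (Hsig1 : 0 < sig1) (Hsig2 : 0 < sig2)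
  (HlamU : 0 < lamU) (HlamL : 0 < lamL < 1)
  (Hp : p < 1) (Hp0 : p <> 0)
  (Hdelta : 0 < delta)
  (Hstand1 : delta > qof p / (2 * (1 - rho ^ 2)) *
      ((mu1 / sig1) ^ 2 + (mu2 / sig2) ^ 2 - 2 * rho * (mu1 * mu2) / (sig1 * sig2)))
  (Hstand2 : mu1 <> rho * mu2 * sig1 / sig2)
  (Hstand3 : mu2 <> rho * sig1 * sig2 / (1 + qof p))
  (xl xu : R) (g g1 g2 : R -> R)
  (Hxlu : xl < xu)
  (HC2 : C2_on xl xu g g1 g2)
  (* (G1) *)
  (HG1a : mu1 > rho * mu2 * sig1 / sig2 -> 0 < xl)
  (HG1b : mu1 < rho * mu2 * sig1 / sig2 -> xu < 0)
  (* (G2) *)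
  (HG2 : forall x, xl <= x <= xu ->
     inf_is_zero sig1 (objG rho mu1 mu2 sig1 sig2 p delta x (g x) (g1 x)))
  (* (G3) *)
  (HG3a : g1 xl = 0) (HG3b : g1 xu = 0)
  (HG3c : is_RInt (fun x => g1 x / x) xl xu (ln ((1 + lamU) / (1 - lamL))))
  (* (G4) *)
  (HG4 : forall x, xl <= x <= xu ->
     0 < qof p * g x /\
     0 < qof p * g x * (g1 x + 1) - (1 + qof p) * x * g1 x /\
     0 < qof p * (g x - x * g1 x) /\
     0 < g1 x + 1)
  (* (G5) *)
  (HG5 : forall x, xl < x < xu -> 0 < g1 x / x) :
  exists mh s1h s2h : R -> R,
    let ah := fun x => alphaF rho mu1 mu2 sig1 sig2 p delta (mh x) (s1h x) (s2h x) in
    let bh := fun x => betaF rho mu1 mu2 sig1 sig2 p (mh x) (s1h x) (s2h x) in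
    let ch := fun x => gammaF rho (s1h x) (s2h x) in
    let t1h := fun x => theta1 rho mu1 mu2 sig1 sig2 (mh x) (s1h x) (s2h x) in
    let t2h := fun x => theta2 rho mu1 mu2 sig1 sig2 (mh x) (s1h x) (s2h x) in
    let I := fun x => xl <= x <= xu in
    let Io := fun x => xl < x < xu in
    (* 1. the minimizer exists and is unique *)
    (forall x, I x ->
       s1h x <> - sig1 /\
       objG rho mu1 mu2 sig1 sig2 p delta x (g x) (g1 x) (mh x) (s1h x) (s2h x)
         = Finite 0 /\
       (forall m s1 s2, s1 <> - sig1 ->
          objG rho mu1 mu2 sig1 sig2 p delta x (g x) (g1 x) m s1 s2 = Finite 0 ->
          m = mh x /\ s1 = s1h x /\ s2 = s2h x)) /\
    (* 2. Lipschitz regularity *)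
    lipschitz_on I ah /\ lipschitz_on I bh /\ lipschitz_on I ch /\
    lipschitz_on I t1h /\ lipschitz_on I t2h /\
    lipschitz_on Io (fun x => s1h x / g1 x) /\
    lipschitz_on Io (fun x => s2h x / g1 x) /\
    lipschitz_on Io (fun x => bh x / g1 x) /\
    (* 3. the ODE, in the interior ... *)
    (forall x, Io x -> exists d,
       is_derive (fun y => y / g1 y) x d /\
       - ah x * g1 x - (mh x + bh x) + ch x * d = 0) /\
    (* ... and at the end points, where gamma_hat * (x/g')' is understood as
       its limit from inside the interval *)
    filterlim (fun y => ch y * Derive (fun z => z / g1 z) y) (at_right xl)
      (locally (ah xl * g1 xl + (mh xl + bh xl))) /\
    filterlim (fun y => ch y * Derive (fun z => z / g1 z) y) (at_left xu)
      (locally (ah xu * g1 xu + (mh xu + bh xu))).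
Proof.
  exists (m_hat rho mu1 mu2 sig1 sig2 p g g1), (s1_hat sig1 p g g1),
    (s2_hat rho mu2 sig1 sig2 p g g1).
  cbv zeta.
  split; [intros x Hx; eapply minimizer_unique_zero; eassumption|].
  split; [eapply lipschitz_alpha_hat; eassumption|].
  split; [eapply lipschitz_beta_hat; eassumption|].
  split; [eapply lipschitz_gamma_hat; eassumption|].
  split; [eapply lipschitz_theta1_hat; eassumption|].
  split; [eapply lipschitz_theta2_hat; eassumption|].
  split; [eapply lipschitz_s1_hat_div_g1; eassumption|].
  split; [eapply lipschitz_s2_hat_div_g1; eassumption|].
  split; [eapply lipschitz_beta_hat_div_g1; eassumption|].
  split; [intros x Hx; eapply ode_interior; eassumption|].
  split; [eapply ode_left_end | eapply ode_right_end]; eassumption.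
Qed.
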